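(* For every $\gamma>0$, $2\arctan\gamma<\min\{\eta^{-1}(\gamma),\pi\}$.
   Context: Let $\psi(\theta)=\frac{\theta-\sin\theta}{1-\cos\theta}$ and $A(\theta)=\frac{\theta\cos\frac\theta2-2\sin\frac\theta2}{\theta-\sin\theta}$ for $0<\theta<2\pi$. The function $\eta(\theta)=\psi(\theta)(1-A(\theta))$ is a strictly increasing bijection of $(0,2\pi)$ onto $(0,\infty)$, and $\eta^{-1}$ denotes its inverse. *)

From Stdlib Require Import Reals ClassicalEpsilon.
Open Scope R_scope.

Definition psi (t : R) : R := (t - sin t) / (1 - cos t).

Definition Afun (t : R) : R := (t * cos (t / 2) - 2 * sin (t / 2)) / (t - sin t).

Definition eta (t : R) : R := psi t * (1 - Afun t).

(* η^{-1}(γ): the (unique, by the stated bijectivity of η : (0,2π) -> (0,∞))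
   θ ∈ (0, 2π) with η(θ) = γ; chosen by Hilbert's epsilon. *)
Definition eta_inv (g : R) : R :=
  epsilon (inhabits 0) (fun t => 0 < t < 2 * PI /\ eta t = g).

(* With s = θ/2, the half-angle formulas give η(θ) = (s + sin s) / (1 + cos s), and
   tan s - η(2s) = (sin s - s cos s) / (cos s (1 + cos s)) > 0 for 0 < s < π/2.
   Hence γ = η(θ) < tan(θ/2), i.e. 2 arctan γ < θ = η⁻¹(γ), whenever θ < π;
   when θ ≥ π the bound 2 arctan γ < π suffices. *)

From Stdlib Require Import Reals Lra Psatz ClassicalEpsilon.
Open Scope R_scope.

(* [x sin x] is the derivative of [sin x - x cos x], which vanishes at 0. *)
Lemma mul_cos_lt_sin (s : R) : 0 < s < PI -> s * cos s < sin s.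
Proof.
  intros Hs.
  destruct (MVT_cor2 (fun x => sin x - x * cos x) (fun x => x * sin x) 0 s
              (proj1 Hs)) as [c [Hc Hcs]].
  - intros c _.
    replace (c * sin c) with (cos c - (1 * cos c + c * (- sin c))) by ring.
    exact (derivable_pt_lim_minus sin (id * cos)%F c _ _ (derivable_pt_lim_sin c)
      (derivable_pt_lim_mult id cos c _ _ (derivable_pt_lim_id c) (derivable_pt_lim_cos c))).
  - rewrite sin_0, cos_0 in Hc.
    assert (0 < sin c) by (apply sin_gt_0; lra).
    assert (0 < c * sin c * s) by (apply Rmult_lt_0_compat; [apply Rmult_lt_0_compat|]; lra).
    lra.
Qed.

Lemma eta_double (s : R) : 0 < s < PI ->
  eta (2 * s) = (s + sin s) / (1 + cos s).
Proof.
  intros Hs.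
  assert (Hsin : 0 < sin s) by (apply sin_gt_0; lra).
  pose proof (sin2_cos2 s) as Hsc; unfold Rsqr in Hsc.
  assert (Hcos : -1 < cos s < 1) by nra.
  assert (Hnum : sin (2 * s) < 2 * s) by (apply sin_lt_x; lra).
  assert (Hden : 1 - cos (2 * s) = 2 * (1 - cos s) * (1 + cos s))
    by (rewrite cos_2a_sin; nra).
  unfold eta, psi, Afun.
  replace (2 * s / 2) with s by field.
  rewrite Hden, sin_2a.
  rewrite sin_2a in Hnum.
  field; lra.
Qed.

Lemma eta_lt_tan_half (s : R) : 0 < s < PI / 2 -> eta (2 * s) < tan s.
Proof.
  intros Hs.
  assert (0 < cos s) by (apply cos_gt_0; lra).
  assert (0 < sin s) by (apply sin_gt_0; lra).
  pose proof (mul_cos_lt_sin s ltac:(lra)).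
  rewrite eta_double by lra; unfold tan.
  apply Rlt_0_minus.
  replace (sin s / cos s - (s + sin s) / (1 + cos s))
    with ((sin s - s * cos s) / (cos s * (1 + cos s))) by (field; lra).
  apply Rdiv_lt_0_compat; nra.
Qed.

Lemma double_atan_eta_lt (t : R) : 0 < t < PI -> 2 * atan (eta t) < t.
Proof.
  intros Ht.
  replace t with (2 * (t / 2)) at 1 2 by field.
  assert (Hlt := eta_lt_tan_half (t / 2) ltac:(lra)).
  apply atan_increasing in Hlt.
  rewrite atan_tan in Hlt by lra.
  lra.
Qed.

(* Intermediate value theorem for [s + sin s - g (1 + cos s)] on [0, π]. *)
Lemma eta_surjective (g : R) : 0 < g -> exists t, 0 < t < 2 * PI /\ eta t = g.
Proof.
  intros Hg.
  assert (Hc : continuity (fun s => s + sin s - g * (1 + cos s))) by reg.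
  destruct (IVT _ 0 PI Hc PI_RGT_0) as [s [Hs Hf]].
  - rewrite sin_0, cos_0; lra.
  - rewrite sin_PI, cos_PI; pose proof PI_RGT_0; lra.
  - assert (s <> 0) by (intros ->; rewrite sin_0, cos_0 in Hf; lra).
    assert (s <> PI) by (intros ->; rewrite sin_PI, cos_PI in Hf; lra).
    exists (2 * s); split; [lra|].
    rewrite eta_double by lra.
    assert (0 < sin s) by (apply sin_gt_0; lra).
    pose proof (sin2_cos2 s) as Hsc; unfold Rsqr in Hsc.
    assert (1 + cos s <> 0) by nra.
    field_simplify_eq; lra.
Qed.

Lemma eta_inv_spec (g : R) : 0 < g ->
  0 < eta_inv g < 2 * PI /\ eta (eta_inv g) = g.
Proof.
  intros Hg.
  exact (epsilon_spec (inhabits 0) (fun t => 0 < t < 2 * PI /\ eta t = g)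
           (eta_surjective g Hg)).
Qed.

Theorem lemma4p2 : forall g : R, 0 < g -> 2 * atan g < Rmin (eta_inv g) PI.
Proof.
  intros g Hg.
  destruct (eta_inv_spec g Hg) as [Ht Heta].
  assert (Hpi : 2 * atan g < PI) by (pose proof (atan_bound g); lra).
  apply Rmin_glb_lt; [|exact Hpi].
  destruct (Rlt_le_dec (eta_inv g) PI) as [Hlt|]; [|lra].
  rewrite <- Heta at 1.
  apply double_atan_eta_lt; lra.
Qed.
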